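(* Fix integers $N,d\ge1$, a function $v:\{0,1\}^N\to\{0,1\}$ and non-negative weights $(q^{(a)}_{\mathbf{x}})$, defined for $a=v(\mathbf{x})$, with $\sum_{\mathbf{x}}q^{(v(\mathbf{x}))}_{\mathbf{x}}=1$. For a density operator $\rho$ on $\mathbb{C}^N\otimes\mathbb{C}^d$ and a family of controlled unitaries $U_{\mathbf{x}}=\sum_{j=1}^N|j\rangle\langle j|\otimes U_j^{(x_j)}$ (with arbitrary unitaries $U_j^{(0)},U_j^{(1)}$ on $\mathbb{C}^d$), let $$P_W(\rho,U_{\mathbf{x}})=\max_{\{\Pi_0,\Pi_1\}}\Big(\sum_{v(\mathbf{x})=1}q^{(1)}_{\mathbf{x}}\mathrm{Tr}[\Pi_1U_{\mathbf{x}}\rho U_{\mathbf{x}}^\dagger]+\sum_{v(\mathbf{x})=0}q^{(0)}_{\mathbf{x}}\mathrm{Tr}[\Pi_0U_{\mathbf{x}}\rho U_{\mathbf{x}}^\dagger]\Big),$$ the maximum taken over two-outcome POVMs $\{\Pi_0,\Pi_1\}$ on $\mathbb{C}^N\otimes\mathbb{C}^d$. Then the maximum of $P_W(\rho,U_{\mathbf{x}})$ over all such pairs $(\rho,U_{\mathbf{x}})$ can be obtained by a pair of the form $\rho=|\psi\rangle\langle\psi|$ with $|\psi\rangle=\sum_{i=1}^N\sqrt{p_i}\,|i\rangle|\chi\rangle$ for some unit vector $|\chi\rangle\in\mathbb{C}^d$ and some $p_i\ge0$ with $\sum_ip_i=1$, and $U_{\mathbf{x}}=\sum_{i=1}^N|i\rangle\langle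 i|\otimes (U_i)^{x_i}$ for some list of unitaries $(U_1,\dots,U_N)$ on $\mathbb{C}^d$ (so the unitary applied at location $i$ is the identity when $x_i=0$ and $U_i$ when $x_i=1$).
   Context: $\{|1\rangle,\dots,|N\rangle\}$ is the standard orthonormal basis of $\mathbb{C}^N$, modeling $N$ spatial paths of a single particle with a $d$-dimensional internal degree of freedom; bits $x_j$ control the local unitary applied on path $j$. *)

(* complex numbers C = R[i] over an arbitrary real closed
   field R (covers the usual complex numbers, R = real numbers). *)
From HB Require Import structures.
From mathcomp Require Import all_boot all_order all_algebra.
From mathcomp Require Import complex mxtens.
Set Implicit Arguments. Unset Strict Implicit. Unset Printing Implicit Defensive.
Import Order.TTheory GRing.Theory Num.Theory.
Local Open Scope ring_scope.

Section QDefs.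
Variable R : rcfType.
Local Notation C := (R[i]).

Definition dag m n (A : 'M[C]_(m, n)) : 'M[C]_(n, m) := (map_mx Num.conj A)^T.

Definition hermitian n (A : 'M[C]_n) : Prop := dag A = A.

Definition psd n (A : 'M[C]_n) : Prop :=
  hermitian A /\ forall u : 'cV[C]_n, 0 <= (dag u *m A *m u) 0 0.

Definition density n (rho : 'M[C]_n) : Prop := psd rho /\ \tr rho = 1.

Definition unitary n (U : 'M[C]_n) : Prop := U *m dag U = 1%:M.

Definition povm n (Pi0 Pi1 : 'M[C]_n) : Prop :=
  psd Pi0 /\ psd Pi1 /\ Pi0 + Pi1 = 1%:M.

Definition ket N (j : 'I_N) : 'cV[C]_N := delta_mx j 0.

Definition ctrlU N d (Us : 'I_N -> bool -> 'M[C]_d) (x : {ffun 'I_N -> bool})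
  : 'M[C]_(N * d) :=
  \sum_(j < N) (ket j *m dag (ket j)) *t Us j (x j).

(* the figure of merit for a fixed POVM {Pi0, Pi1} *)
Definition score N d (v : {ffun 'I_N -> bool} -> bool)
  (q : {ffun 'I_N -> bool} -> C) (rho : 'M[C]_(N * d))
  (Us : 'I_N -> bool -> 'M[C]_d) (Pi0 Pi1 : 'M[C]_(N * d)) : C :=
  \sum_(x : {ffun 'I_N -> bool})
     q x * \tr ((if v x then Pi1 else Pi0)
                *m (ctrlU Us x *m rho *m dag (ctrlU Us x))).

Definition special_psi N d (p : 'I_N -> R) (chi : 'cV[C]_d) : 'cV[C]_(N * d) :=
  \sum_(i < N) ((Num.sqrt (p i))%:C)%C *: (ket i *t chi).

Definition special_U N d (Ul : 'I_N -> 'M[C]_d) : 'I_N -> bool -> 'M[C]_d :=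
  fun i b => if b then Ul i else 1%:M.

End QDefs.

(* Since the score is linear in rho, the spectral decomposition of rho shows that
   one of its eigenvectors psi does at least as well, so rho may be taken pure.
   Split psi along the paths as psi = sum_i |i> (x) psi_i and write
   psi_i = sqrt(p_i) W_i e_0 with W_i unitary.  Then
   U_i^(x_i) W_i = (U_i^(0) W_i) (W_i^dag U_i^(0)dag U_i^(x_i) W_i), where the left
   factor does not depend on x: so U_x psi = V U'_x psi' with psi' of the special
   form, U'_x controlled by U'_i = W_i^dag U_i^(0)dag U_i^(1) W_i (identity when
   x_i = 0) and V a fixed unitary, which is absorbed into the POVM {V^dag Pi_a V}. *)

From Pilot Require Import Defs.
From HB Require Import structures.
From mathcomp Require Import all_boot all_order all_algebra.
From mathcomp Require Import complex mxtens.
Import Order.TTheory GRing.Theory Num.Theory.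
Set Implicit Arguments. Unset Strict Implicit. Unset Printing Implicit Defensive.
Local Open Scope complex_scope.
Local Open Scope ring_scope.

Section Adjoint.
Variable R : rcfType.
Local Notation C := R[i].

Lemma dagE m n (A : 'M[C]_(m, n)) i j : dag A i j = (A j i)^*.
Proof. by rewrite !mxE. Qed.

Lemma dag_trmxC m n (A : 'M[C]_(m, n)) : dag A = (A ^t* )%sesqui.
Proof. by rewrite /dag map_trmx. Qed.

Lemma dagK m n (A : 'M[C]_(m, n)) : dag (dag A) = A.
Proof. by apply/matrixP=> i j; rewrite !dagE conjCK. Qed.

Lemma dag_mul m n p (A : 'M[C]_(m, n)) (B : 'M[C]_(n, p)) :
  dag (A *m B) = dag B *m dag A.
Proof. by rewrite /dag map_mxM trmx_mul. Qed.

Lemma dagZ m n c (A : 'M[C]_(m, n)) : dag (c *: A) = c^* *: dag A.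
Proof. by apply/matrixP=> i j; rewrite !(dagE, mxE) rmorphM. Qed.

Lemma dag_sum m n (I : finType) (F : I -> 'M[C]_(m, n)) :
  dag (\sum_i F i) = \sum_i dag (F i).
Proof. by rewrite /dag raddf_sum linear_sum. Qed.

Lemma dag_delta m n (i : 'I_m) (j : 'I_n) :
  dag (delta_mx i j : 'M[C]_(m, n)) = delta_mx j i.
Proof.
by apply/matrixP=> a b; rewrite dagE !mxE; case: eqP; case: eqP; rewrite /= ?conjC1 ?conjC0.
Qed.

Lemma dag_tens m n p r (A : 'M[C]_(m, n)) (B : 'M[C]_(p, r)) :
  dag (A *t B) = dag A *t dag B.
Proof. by rewrite /dag map_mxT trmx_tens. Qed.

Lemma unitaryP n (U : 'M[C]_n) : reflect (unitary U) (U \is unitarymx).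
Proof. by rewrite /unitary dag_trmxC; apply: unitarymxP. Qed.

Lemma mul_dag_unitary n (U : 'M[C]_n) : unitary U -> dag U *m U = 1%:M.
Proof. exact: mulmx1C. Qed.

Lemma mulmx_unitaryK m n (A : 'M[C]_(m, n)) (U : 'M[C]_n) :
  unitary U -> A *m U *m dag U = A.
Proof. by move=> U_unitary; rewrite -mulmxA U_unitary mulmx1. Qed.

Lemma unitary1 n : unitary (1%:M : 'M[C]_n).
Proof. by rewrite /unitary mul1mx dag_trmxC trmx1 map_mx1. Qed.

Lemma unitary_mul n (U V : 'M[C]_n) : unitary U -> unitary V -> unitary (U *m V).
Proof. by move=> /unitaryP U_unitary /unitaryP V_unitary; apply/unitaryP/mul_unitarymx. Qed.

Lemma unitary_dag n (U : 'M[C]_n) : unitary U -> unitary (dag U).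
Proof. by move=> U_unitary; rewrite /unitary dagK mul_dag_unitary. Qed.

End Adjoint.

Section UnitVectors.
Variable R : rcfType.
Local Notation C := R[i].

Lemma cnorm_ge0 n (x : 'cV[C]_n) : 0 <= (dag x *m x) 0 0.
Proof. by rewrite mxE; apply: sumr_ge0 => j _; rewrite dagE mulrC mul_conjC_ge0. Qed.

Lemma cnorm_eq0 n (x : 'cV[C]_n) : (dag x *m x) 0 0 = 0 -> x = 0.
Proof.
rewrite mxE => /psumr_eq0P x0; apply/matrixP => j k; rewrite (ord1 k) mxE.
apply/eqP; rewrite -mul_conjC_eq0 mulrC -dagE; apply/eqP/x0 => // i _.
by rewrite dagE mulrC mul_conjC_ge0.
Qed.

(* Gram-Schmidt applied to a matrix all of whose rows are a^dag keeps its first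
   row, which is then the first row of a unitary matrix. *)
Lemma unitary_completion d (a : 'cV[C]_d.+1) : (dag a *m a) 0 0 = 1 ->
  exists2 W : 'M[C]_d.+1, unitary W & W *m delta_mx 0 0 = a.
Proof.
move=> a_unit; pose A : 'M[C]_d.+1 := \matrix_(i, j) (a j 0)^*.
have rowA : row 0 A = dag a by apply/rowP => j; rewrite !mxE.
pose S := schmidt A; have /unitaryP S_unitary := schmidt_unitarymx A (leqnn _).
exists (dag S); first exact: unitary_dag.
rewrite -[delta_mx 0 0]dag_delta -dag_mul -rowE.
suff -> : row 0 S = dag a by rewrite dagK.
have := row_schmidt_sub A 0; rewrite (big_pred1 0) => [|k]; last first.
  by rewrite /= leqn0 -val_eqE.
rewrite genmxE rowA => /sub_rVP [c a_cS]; rewrite a_cS.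
have S0_unit : (row 0 S *m dag (row 0 S)) 0 0 = 1.
  by move: S_unitary => /unitaryP/row_unitarymxP/(_ 0 0); rewrite dotmxE dag_trmxC eqxx.
have c_ge0 : 0 <= c.
  have := form1_row_schmidt A 0.
  by rewrite dotmxE rowA a_cS -dag_trmxC -scalemxAl mxE S0_unit mulr1.
have c_real : c^* = c by apply/CrealP/ger0_real.
have cc1 : c * c = 1.
  rewrite -a_unit -[a in _ *m a]dagK a_cS dagZ -scalemxAr -scalemxAl scalerA mxE.
  by rewrite S0_unit mulr1 c_real.
suff -> : c = 1 by rewrite scale1r.
by apply/eqP; rewrite -(@eqrXn2 _ 2) // expr2 cc1 expr1n.
Qed.

Lemma cV_polar d (phi : 'cV[C]_d.+1) :
  exists2 W : 'M[C]_d.+1, unitary W &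
    phi = (Num.sqrt (complex.Re ((dag phi *m phi) 0 0)))%:C *: (W *m delta_mx 0 0).
Proof.
have [->|phi_neq0] := eqVneq phi 0.
  by exists 1%:M; [exact: unitary1 | rewrite mulmx0 mxE /= sqrtr0 scale0r].
set n := (dag phi *m phi) 0 0; set s := (Num.sqrt (complex.Re n))%:C.
have n_ge0 : 0 <= n := cnorm_ge0 phi.
have nE : s * s = n.
  have ReE : (complex.Re n)%:C = n by rewrite RRe_real ?ger0_real.
  by rewrite -rmorphM -expr2 sqr_sqrtr // -ler0c ReE.
have s_neq0 : s != 0.
  by apply: contra_neq phi_neq0 => s0; apply: cnorm_eq0; rewrite -/n -nE s0 mul0r.
have s_real : s^* = s by apply/CrealP/ger0_real; rewrite ler0c sqrtr_ge0.
have [W W_unitary We0] : exists2 W : 'M[C]_d.+1, unitary W & W *m delta_mx 0 0 = s^-1 *: phi.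
  apply: unitary_completion.
  rewrite dagZ -scalemxAl -scalemxAr scalerA mxE -/n -nE fmorphV /= s_real.
  by rewrite mulrACA mulVf // mulr1.
by exists W; rewrite // We0 scalerA divff // scale1r.
Qed.

End UnitVectors.

Section BlockDiagonal.
Variable R : rcfType.
Local Notation C := R[i].
Local Notation ket := (ket R).

Lemma tensmxZr m n p r c (A : 'M[C]_(m, n)) (B : 'M[C]_(p, r)) :
  A *t (c *: B) = c *: (A *t B).
Proof.
apply/matrixP=> i j; case: (mxtens_indexP i) => [a b]; case: (mxtens_indexP j) => [e f].
by rewrite [RHS]mxE !tensmxE mxE mulrCA.
Qed.

Lemma tens_cVE m p (a : 'cV[C]_m) (b : 'cV[C]_p) i r :
  (a *t b) (mxtens_index (i, r)) 0 = a i 0 * b r 0.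
Proof.
have := tensmxE a b i r 0 0.
by have -> : mxtens_index ((0 : 'I_1), (0 : 'I_1)) = 0 by apply: val_inj.
Qed.

Variables N d : nat.
Implicit Types A B : 'I_N -> 'M[C]_d.

Definition blockdiag A : 'M[C]_(N * d) := \sum_(i < N) delta_mx i i *t A i.

Lemma ctrlU_blockdiag (Us : 'I_N -> bool -> 'M[C]_d) x :
  ctrlU Us x = blockdiag (fun j => Us j (x j)).
Proof. by apply: eq_bigr => j _; rewrite /ket dag_delta mul_delta_mx. Qed.

Lemma blockdiag_mul A B : blockdiag A *m blockdiag B = blockdiag (fun i => A i *m B i).
Proof.
rewrite /blockdiag mulmx_suml; apply: eq_bigr => i _.
rewrite mulmx_sumr (bigD1 i) //= big1 ?addr0 => [|j ji].
  by rewrite tensmx_mul mul_delta_mx.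
by rewrite tensmx_mul mul_delta_mx_cond eq_sym (negbTE ji) mulr0n tens0mx.
Qed.

Lemma blockdiag_dag A : dag (blockdiag A) = blockdiag (fun i => dag (A i)).
Proof. by rewrite dag_sum; apply: eq_bigr => i _; rewrite dag_tens dag_delta. Qed.

Lemma blockdiag_ket A j (x : 'cV[C]_d) :
  blockdiag A *m (ket j *t x) = ket j *t (A j *m x).
Proof.
rewrite mulmx_suml (bigD1 j) //= big1 ?addr0 => [|i ij].
  by rewrite tensmx_mul mul_delta_mx.
by rewrite tensmx_mul mul_delta_mx_cond (negbTE ij) mulr0n tens0mx.
Qed.

Lemma blockdiag1 : blockdiag (fun=> 1%:M) = 1%:M.
Proof.
apply/matrixP=> i j; case: (mxtens_indexP i) => [a b]; case: (mxtens_indexP j) => [c e].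
rewrite summxE (bigD1 a) //= big1 ?addr0 => [|k ka]; last first.
  by rewrite tensmxE !mxE eq_sym (negbTE ka) mul0r.
rewrite tensmxE !mxE eqxx (inj_eq (can_inj (@mxtens_indexK _ _))) xpair_eqE.
by rewrite eq_sym -natrM mulnb.
Qed.

Lemma unitary_blockdiag A : (forall i, unitary (A i)) -> unitary (blockdiag A).
Proof.
move=> A_unitary; rewrite /unitary blockdiag_dag blockdiag_mul -blockdiag1.
by apply: eq_bigr => i _; rewrite A_unitary.
Qed.

Definition vblock (psi : 'cV[C]_(N * d)) (i : 'I_N) : 'cV[C]_d :=
  \col_r psi (mxtens_index (i, r)) 0.

Lemma vblock_sum psi : psi = \sum_i ket i *t vblock psi i.
Proof.
apply/matrixP=> k j; case: (mxtens_indexP k) => [a r]; rewrite (ord1 j).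
rewrite summxE (bigD1 a) //= big1 ?addr0 => [|i ia].
  by rewrite tens_cVE !mxE eqxx mul1r.
by rewrite tens_cVE !mxE eq_sym (negbTE ia) mul0r.
Qed.

Lemma cnorm_vblock psi :
  (dag psi *m psi) 0 0 = \sum_i (dag (vblock psi i) *m vblock psi i) 0 0.
Proof.
rewrite mxE (reindex (@mxtens_index N d)) /=; last first.
  exact: onW_bij (Bijective (@mxtens_indexK _ _) (@mxtens_unindexK _ _)).
under [RHS]eq_bigr do rewrite mxE.
by rewrite pair_bigA; apply: eq_bigr => -[i r] _; rewrite !dagE !mxE.
Qed.

End BlockDiagonal.

Lemma convex_comb_le_max (F : numDomainType) (I : finType) (D g : I -> F) :
  (forall k, 0 <= D k) -> \sum_k D k = 1 -> (forall k, g k \is Num.real) ->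
  exists k, \sum_j D j * g j <= g k.
Proof.
move=> D_ge0 D_sum1 g_real.
have [k0 _ | I0] := pickP (@predT I); last first.
  by move: D_sum1; rewrite big_pred0 // => /esym/eqP; rewrite oner_eq0.
have [k k_max] : exists k, forall j, g j <= g k.
  suff [k k_max] : exists k, forall j, j \in enum I -> g j <= g k.
    by exists k => j; apply: k_max; rewrite mem_enum.
  elim: (enum I) => [|a s [k k_max]]; first by exists k0.
  have /orP [le_ak|le_ka] := real_leVge (g_real a) (g_real k).
    by exists k => j; rewrite inE => /predU1P [-> //|/k_max].
  by exists a => j; rewrite inE => /predU1P [-> //|/k_max/le_trans]; apply.
exists k; rewrite -[g k]mul1r -D_sum1 mulr_suml; apply: ler_sum => j _.
exact: ler_wpM2l.
Qed.

Section PureStates.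
Variable R : rcfType.
Local Notation C := R[i].

Lemma density_pure_decomposition n (rho : 'M[C]_n) : density rho ->
  exists (D : 'I_n -> C) (u : 'I_n -> 'cV[C]_n),
    [/\ forall k, 0 <= D k, \sum_k D k = 1,
        forall k, (dag (u k) *m u k) 0 0 = 1 &
        rho = \sum_k D k *: (u k *m dag (u k))].
Proof.
move=> [[rho_herm rho_psd] rho_tr].
have /orthomx_spectralP : rho \is normalmx by rewrite qualifE -dag_trmxC rho_herm.
rewrite invmx_unitary ?spectral_unitarymx // -dag_trmxC.
have /unitaryP P_unitary := spectral_unitarymx rho.
set P := spectralmx rho in P_unitary *; set D := spectral_diag rho => rhoE.
pose u k := dag P *m delta_mx k (0 : 'I_1).
have dag_u k : dag (u k) = delta_mx 0 k *m P by rewrite dag_mul dagK dag_delta.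
exists (fun k => D 0 k), u; split.
- move=> k; have := rho_psd (u k).
  rewrite dag_u /u rhoE !mulmxA !mulmx_unitaryK // -rowE -colE !mxE.
  by rewrite eqxx mulr1n.
- by rewrite -mxtrace_diag -rho_tr rhoE mxtrace_mulC mulmxA P_unitary mul1mx.
- by move=> k; rewrite dag_u /u !mulmxA mulmx_unitaryK // mul_delta_mx mxE !eqxx.
rewrite {1}rhoE diag_mx_sum_delta mulmx_sumr mulmx_suml; apply: eq_bigr => k _.
by rewrite -scalemxAr -scalemxAl dag_u /u mulmxA -(mulmxA (dag P)) mul_delta_mx.
Qed.

Lemma mxtrace_pure_conj n (M U : 'M[C]_n) (w : 'cV[C]_n) :
  \tr (M *m (U *m (w *m dag w) *m dag U)) = (dag (U *m w) *m M *m (U *m w)) 0 0.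
Proof.
rewrite dag_mul !mulmxA -[M *m U *m w *m dag w *m dag U]mulmxA -dag_mul.
by rewrite mxtrace_mulC trace_mx11 !mulmxA.
Qed.

Variables (N d : nat) (v : {ffun 'I_N -> bool} -> bool) (q : {ffun 'I_N -> bool} -> C).
Variables (Us : 'I_N -> bool -> 'M[C]_d) (Pi0 Pi1 : 'M[C]_(N * d)).

Lemma score_sum (I : finType) (c : I -> C) (X : I -> 'M[C]_(N * d)) :
  score v q (\sum_k c k *: X k) Us Pi0 Pi1 = \sum_k c k * score v q (X k) Us Pi0 Pi1.
Proof.
rewrite /score; under [RHS]eq_bigr do rewrite mulr_sumr.
rewrite exchange_big; apply: eq_bigr => x _.
rewrite mulmx_sumr mulmx_suml mulmx_sumr raddf_sum mulr_sumr; apply: eq_bigr => k _ /=.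
by rewrite -scalemxAr -scalemxAl -scalemxAr mxtraceZ mulrCA.
Qed.

Hypotheses (q_ge0 : forall x, 0 <= q x) (hP : povm Pi0 Pi1).

Lemma score_pure_ge0 (w : 'cV[C]_(N * d)) : 0 <= score v q (w *m dag w) Us Pi0 Pi1.
Proof.
case: hP => [[_ Pi0_ge0] [[_ Pi1_ge0] _]].
apply: sumr_ge0 => x _; apply: mulr_ge0 => //.
by rewrite mxtrace_pure_conj; case: (v x).
Qed.

Lemma score_pure_reduction (rho : 'M[C]_(N * d)) : density rho ->
  exists2 u : 'cV[C]_(N * d), (dag u *m u) 0 0 = 1 &
    score v q rho Us Pi0 Pi1 <= score v q (u *m dag u) Us Pi0 Pi1.
Proof.
move=> /density_pure_decomposition [D [u [D_ge0 D_sum1 u_unit ->]]].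
have [k le_k] := convex_comb_le_max D_ge0 D_sum1
  (fun k => ger0_real (score_pure_ge0 (u k))).
by exists (u k); rewrite // score_sum.
Qed.

End PureStates.

Section Reduction.
Variable R : rcfType.
Local Notation C := R[i].

Lemma unit_cV_special_psi N d (psi : 'cV[C]_(N * d.+1)) :
  (dag psi *m psi) 0 0 = 1 ->
  exists (p : 'I_N -> R) (W : 'I_N -> 'M[C]_d.+1),
    [/\ (forall i, 0 <= p i) /\ \sum_i p i = 1, forall i, unitary (W i) &
        psi = blockdiag W *m special_psi p (delta_mx 0 0)].
Proof.
move=> psi_unit.
have [W W_unitary vblockE] := fin_all_exists2 (fun i => cV_polar (vblock psi i)).
pose p i := complex.Re ((dag (vblock psi i) *m vblock psi i) 0 0).
have pE i : (p i)%:C = (dag (vblock psi i) *m vblock psi i) 0 0.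
  by rewrite RRe_real ?ger0_real ?cnorm_ge0.
exists p, W; split=> //.
- split=> [i|]; first by rewrite -ler0c pE cnorm_ge0.
  apply: complexI; rewrite rmorph_sum rmorph1 /=.
  by under eq_bigr do rewrite pE; rewrite -cnorm_vblock.
rewrite {1}(vblock_sum psi) mulmx_sumr; apply: eq_bigr => i _.
by rewrite -scalemxAr blockdiag_ket [in LHS]vblockE tensmxZr.
Qed.

Lemma povm_conj n (V Pi0 Pi1 : 'M[C]_n) : unitary V -> povm Pi0 Pi1 ->
  povm (dag V *m Pi0 *m V) (dag V *m Pi1 *m V).
Proof.
have psd_conj M : psd M -> psd (dag V *m M *m V).
  case=> M_herm M_ge0; split=> [|u].
    by rewrite /Defs.hermitian !dag_mul dagK M_herm mulmxA.
  by rewrite !mulmxA -dag_mul -!mulmxA mulmxA; apply: M_ge0.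
move=> V_unitary [Pi0_psd [Pi1_psd Pi_sum]].
split; last split; try exact: psd_conj.
by rewrite -mulmxDl -mulmxDr Pi_sum mulmx1 mul_dag_unitary.
Qed.

Lemma score_conj N d v q (Us Us' : 'I_N -> bool -> 'M[C]_d) (V : 'M[C]_(N * d))
    (psi phi : 'cV[C]_(N * d)) Pi0 Pi1 :
  (forall x, ctrlU Us x *m psi = V *m (ctrlU Us' x *m phi)) ->
  score v q (psi *m dag psi) Us Pi0 Pi1 =
  score v q (phi *m dag phi) Us' (dag V *m Pi0 *m V) (dag V *m Pi1 *m V).
Proof.
move=> UpsiE; apply: eq_bigr => x _; rewrite !mxtrace_pure_conj UpsiE.
by congr (_ * _); case: (v x); rewrite dag_mul !mulmxA.
Qed.

Section Relabelling.
Variables (N d : nat) (Us : 'I_N -> bool -> 'M[C]_d) (W : 'I_N -> 'M[C]_d).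
Hypotheses (Us_unitary : forall i b, unitary (Us i b)) (W_unitary : forall i, unitary (W i)).

Definition relabelled_U i := dag (W i) *m dag (Us i false) *m Us i true *m W i.

Definition relabel_frame := blockdiag (fun i => Us i false *m W i).

Lemma unitary_relabelled_U i : unitary (relabelled_U i).
Proof. by rewrite /relabelled_U; do ![apply: unitary_mul | apply: unitary_dag | done]. Qed.

Lemma unitary_relabel_frame : unitary relabel_frame.
Proof. by apply: unitary_blockdiag => i; apply: unitary_mul. Qed.

Lemma ctrlU_relabel x :
  ctrlU Us x *m blockdiag W = relabel_frame *m ctrlU (special_U relabelled_U) x.
Proof.
rewrite !ctrlU_blockdiag !blockdiag_mul; apply: eq_bigr => i _; congr (_ *t _).
rewrite /special_U /relabelled_U; case: (x i); last by rewrite mulmx1.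
by rewrite !mulmxA mulmx_unitaryK // Us_unitary mul1mx.
Qed.

End Relabelling.
End Reduction.

Theorem lemma2 (R : rcfType) (N d : nat) (hN : (0 < N)%N) (hd : (0 < d)%N)
  (v : {ffun 'I_N -> bool} -> bool) (q : {ffun 'I_N -> bool} -> R[i])
  (hq : forall x, 0 <= q x) (hqsum : \sum_x q x = 1)
  (rho : 'M[R[i]]_(N * d)) (Us : 'I_N -> bool -> 'M[R[i]]_d)
  (Pi0 Pi1 : 'M[R[i]]_(N * d)) :
  density rho -> (forall j b, unitary (Us j b)) -> povm Pi0 Pi1 ->
  exists (p : 'I_N -> R) (chi : 'cV[R[i]]_d) (Ul : 'I_N -> 'M[R[i]]_d)
         (Pi0' Pi1' : 'M[R[i]]_(N * d)),
    [/\ (forall i, 0 <= p i) /\ \sum_i p i = 1,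
        (dag chi *m chi) 0 0 = 1,
        (forall i, unitary (Ul i)),
        povm Pi0' Pi1' &
        score v q rho Us Pi0 Pi1 <=
        score v q (special_psi p chi *m dag (special_psi p chi))
              (special_U Ul) Pi0' Pi1'].
Proof.
case: d hd Us rho Pi0 Pi1 => // d _ Us rho Pi0 Pi1 rho_density Us_unitary hP.
have [psi psi_unit le_psi] := score_pure_reduction v Us hq hP rho_density.
have [p [W [p_distr W_unitary psiE]]] := unit_cV_special_psi psi_unit.
pose V := relabel_frame Us W.
exists p, (delta_mx 0 0), (relabelled_U Us W), (dag V *m Pi0 *m V), (dag V *m Pi1 *m V).
split=> //.
- by rewrite dag_delta mul_delta_mx mxE.
- exact: unitary_relabelled_U.
- exact/povm_conj/hP/unitary_relabel_frame.
have Upsi x : ctrlU Us x *m psi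
    = V *m (ctrlU (special_U (relabelled_U Us W)) x *m special_psi p (delta_mx 0 0)).
  by rewrite psiE mulmxA ctrlU_relabel // mulmxA.
by rewrite -(score_conj v q Pi0 Pi1 Upsi).
Qed.
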